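(* For every $n\in\mathbb{N}$, $A_n(p,q,t)=A_n(q,p,t)$, where $$A_n(p,q,t)=\sum_{\pi\in\mathfrak{S}_n}p^{(13\text{-}2)(\pi)}q^{(2\text{-}31)(\pi)}t^{\operatorname{des}(\pi)}.$$
   Context: For $\pi=a_1\cdots a_n\in\mathfrak{S}_n$: $\operatorname{des}(\pi)=|\{i\in[n-1]:a_i>a_{i+1}\}|$; $(2\text{-}31)(\pi)$ is the number of pairs $1\le i<j\le n-1$ with $a_{j+1}<a_i<a_j$; $(13\text{-}2)(\pi)$ is the number of pairs $2\le i<j\le n$ with $a_{i-1}<a_j<a_i$. *)

From mathcomp Require Import all_boot all_order all_algebra all_fingroup.
Set Implicit Arguments. Unset Strict Implicit. Unset Printing Implicit Defensive.
Import GRing.Theory.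

(* Positions are 0-indexed: a_k = val (s k) for k < n (the paper's a_{k+1}).
   Values are 0..n-1 instead of 1..n (only relative order matters). *)

Definition pval (n : nat) (s : 'S_n) (k : nat) : nat :=
  match insub k : option 'I_n with Some i => val (s i) | None => 0 end.

Definition des (n : nat) (s : 'S_n) : nat :=
  \sum_(0 <= i < n) ((i.+1 < n) && (pval s i.+1 < pval s i)).

Definition pat2_31 (n : nat) (s : 'S_n) : nat :=
  \sum_(0 <= i < n) \sum_(0 <= j < n)
    [&& i < j, j.+1 < n, pval s j.+1 < pval s i & pval s i < pval s j].

Definition pat13_2 (n : nat) (s : 'S_n) : nat :=
  \sum_(0 <= i < n) \sum_(0 <= j < n)
    [&& 0 < i, i < j, pval s i.-1 < pval s j & pval s j < pval s i].

Definition A_poly (R : comNzRingType) (n : nat) (p q t : R) : R :=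
  \sum_(s : 'S_n) p ^+ pat13_2 s * q ^+ pat2_31 s * t ^+ des s.

From Pilot Require Import Defs.
From mathcomp Require Import all_boot all_order all_algebra all_fingroup.
From mathcomp Require Import zify.
Set Implicit Arguments. Unset Strict Implicit. Unset Printing Implicit Defensive.

(* A (2-31) occurrence in a word is a (13-2)
   occurrence in the reversed word, and reversal exchanges descents with
   ascents, so it suffices to show that des and asc have the same joint
   distribution with the two pattern counts.  When a letter x is a double
   ascent or a double descent (the ends of the word count as +oo), let hop x
   move x across the maximal block of smaller letters next to it; otherwise
   hop x does nothing.  This involution keeps both pattern counts and the
   descent/ascent status of every other letter, and swaps x between double
   ascent and double descent.  Hence, counting descent tops at the letters of
   a set S and ascent tops elsewhere, hop x carries the count for S to the
   count for S + x without changing the weight; adding the letters one by one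
   turns asc into des. *)

Lemma head_rev (T : Type) (x0 : T) s : head x0 (rev s) = last x0 s.
Proof. by case/lastP: s => // s y; rewrite rev_rcons last_rcons. Qed.

Lemma last_rev (T : Type) (x0 : T) s : last x0 (rev s) = head x0 s.
Proof. by rewrite -[s in RHS]revK head_rev. Qed.

Lemma uniq_pivot_notin (T : eqType) (x : T) s t : uniq (s ++ x :: t) -> x \notin s ++ t.
Proof. by rewrite -cat1s uniq_catCA cons_uniq => /andP []. Qed.

Lemma drop_pivot (T : eqType) (x : T) s t :
  x \notin s -> drop (index x (s ++ x :: t)).+1 (s ++ x :: t) = t.
Proof. by move=> xNs; rewrite index_pivot // -cat_rcons drop_size_cat ?size_rcons. Qed.

Lemma big_involution (R : Type) (idx : R) (op : Monoid.com_law idx) (T : eqType)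
    (L : seq T) (phi : T -> T) (F : T -> R) :
  uniq L -> {in L, forall l, phi l \in L} -> {in L, forall l, phi (phi l) = l} ->
  \big[op/idx]_(l <- L) F (phi l) = \big[op/idx]_(l <- L) F l.
Proof.
move=> uniq_L phiL phiK; rewrite -(big_map phi xpredT F); apply: perm_big.
apply: uniq_perm => //.
  by rewrite map_inj_in_uniq // => a b aL bL eq_phi; rewrite -(phiK a) // eq_phi phiK.
move=> l; apply/mapP/idP => [[l' l'L ->] | lL]; first exact: phiL.
by exists (phi l); rewrite ?phiL ?phiK.
Qed.

Fixpoint occ13_2 (s : seq nat) : nat :=
  if s is a :: ((b :: s') as t) then count (fun c => a < c < b) s' + occ13_2 t else 0.

Fixpoint ndes (s : seq nat) : nat :=
  if s is a :: ((b :: _) as t) then (b < a) + ndes t else 0.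

Lemma map_iotaS (f : nat -> nat) n :
  map f (iota 0 n.+1) = f 0 :: map (fun i => f i.+1) (iota 0 n).
Proof. by rewrite /= -[1]/(1 + 0) iotaDl -map_comp. Qed.

Lemma occ13_2_cons a s :
  occ13_2 (a :: s) = count (fun c => a < c < head 0 s) (behead s) + occ13_2 s.
Proof. by case: s. Qed.

Lemma occ13_2_map_iota (f : nat -> nat) n :
  \sum_(0 <= i < n) \sum_(0 <= j < n) [&& 0 < i, i < j, f i.-1 < f j & f j < f i]
  = occ13_2 (map f (iota 0 n)).
Proof.
elim: n f => [|n IHn] f; first by rewrite big_geq.
rewrite big_nat_recl // big1 // add0n map_iotaS occ13_2_cons -IHn.
case: n {IHn} => [|n]; first by rewrite !big_geq.
rewrite map_iotaS /=.
under eq_bigr do rewrite big_nat_recl //= add0n.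
rewrite big_nat_recl // [in RHS]big_nat_recl // [X in _ = _ + (X + _)]big1 //.
rewrite add0n; congr (_ + _).
rewrite big_nat_recl // ltnn /= add0n /index_iota subn0.
rewrite count_map; elim: (iota 0 n) => [|j s IHs]; first by rewrite big_nil.
by rewrite big_cons IHs.
Qed.

Lemma ndes_cons a s : ndes (a :: s) = (head a s < a) + ndes s.
Proof. by case: s => //=; rewrite ltnn. Qed.

Lemma ndes_map_iota (f : nat -> nat) n :
  \sum_(0 <= i < n) ((i.+1 < n) && (f i.+1 < f i)) = ndes (map f (iota 0 n)).
Proof.
elim: n f => [|n IHn] f; first by rewrite big_geq.
rewrite big_nat_recl // map_iotaS ndes_cons -IHn.
by congr (_ + _); case: n {IHn} => [|n] //=; rewrite ltnn.
Qed.

Lemma sum2_31_rev (f : nat -> nat) n :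
  \sum_(0 <= i < n) \sum_(0 <= j < n) [&& i < j, j.+1 < n, f j.+1 < f i & f i < f j]
  = \sum_(0 <= i < n) \sum_(0 <= j < n)
      [&& 0 < i, i < j, f (n.-1 - i.-1) < f (n.-1 - j) & f (n.-1 - j) < f (n.-1 - i)].
Proof.
rewrite [RHS]exchange_big big_nat_rev; apply: eq_big_nat => i /andP [_ lt_in].
rewrite big_nat_rev; apply: eq_big_nat => j /andP [_ lt_jn] /=.
case: j lt_jn => [|j] lt_jn.
  by rewrite ltnn andFb (_ : (0 + n - 1).+1 < n = false) ?andbF //; lia.
have -> : n.-1 - j.+1.-1 = (0 + n - j.+2).+1 by lia.
have -> : n.-1 - i = 0 + n - i.+1 by lia.
have -> : n.-1 - j.+1 = 0 + n - j.+2 by lia.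
have -> : (0 + n - i.+1 < 0 + n - j.+2) = (j.+1 < i) by lia.
by have -> : (0 + n - j.+2).+1 < n by lia.
Qed.

Lemma rev_map_iota (f : nat -> nat) n :
  rev (map f (iota 0 n)) = map (fun k => f (n.-1 - k)) (iota 0 n).
Proof.
apply: (@eq_from_nth _ 0) => [|k]; rewrite size_rev !size_map size_iota // => lt_kn.
rewrite nth_rev ?size_map ?size_iota // !(nth_map 0) ?size_iota ?nth_iota //; try lia.
by congr f; lia.
Qed.

Lemma occ2_31_map_iota (f : nat -> nat) n :
  \sum_(0 <= i < n) \sum_(0 <= j < n) [&& i < j, j.+1 < n, f j.+1 < f i & f i < f j]
  = occ13_2 (rev (map f (iota 0 n))).
Proof. by rewrite sum2_31_rev (occ13_2_map_iota (fun k => f (n.-1 - k))) rev_map_iota. Qed.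

(** * Permutations as words *)

(* [Defs.pval], not the projection [pval] of [perm.v]. *)
Definition word n (s : 'S_n) : seq nat := map (Defs.pval s) (iota 0 n).

Lemma pval_ord n (s : 'S_n) (i : 'I_n) : Defs.pval s i = s i.
Proof. by rewrite /Defs.pval valK. Qed.

Lemma word_enum n (s : 'S_n) : word s = [seq val (s i) | i <- enum 'I_n].
Proof. by rewrite /word -val_enum_ord -map_comp; apply: eq_map => i; apply: pval_ord. Qed.

Lemma word_inj n : injective (@word n).
Proof.
move=> s1 s2 eq_w; apply/permP => i; apply: val_inj; rewrite /= -!pval_ord.
have := congr1 (nth 0 ^~ i) eq_w.
by rewrite /word !(nth_map 0) ?size_iota ?nth_iota.
Qed.

Lemma perm_iota_wordP n l : reflect (exists s : 'S_n, l = word s) (perm_eq l (iota 0 n)).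
Proof.
have -> : iota 0 n = map_tuple val (ord_tuple n) by rewrite /= val_enum_ord.
apply: (iffP tuple_permP) => -[s ->]; exists s;
  by rewrite word_enum /=; apply: eq_map => i; rewrite tnth_map tnth_ord_tuple.
Qed.

Lemma big_perm_word (R : Type) (idx : R) (op : Monoid.com_law idx) n (F : seq nat -> R) :
  \big[op/idx]_(s : 'S_n) F (word s) = \big[op/idx]_(l <- permutations (iota 0 n)) F l.
Proof.
rewrite -(big_map (@word n) xpredT); apply: perm_big; apply: uniq_perm.
- by rewrite map_inj_uniq ?index_enum_uniq //; apply: word_inj.
- exact: permutations_uniq.
move=> l; rewrite mem_permutations.
by apply/mapP/perm_iota_wordP => [[s _ ->] | [s ->]]; exists s; rewrite ?mem_index_enum.
Qed.

Lemma A_poly_words (R : comNzRingType) n (p q t : R) :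
  A_poly n p q t = (\sum_(l <- permutations (iota 0 n))
                     p ^+ occ13_2 l * q ^+ occ13_2 (rev l) * t ^+ ndes l)%R.
Proof.
rewrite -big_perm_word; apply: eq_bigr => s _.
by rewrite /pat13_2 /pat2_31 /des occ13_2_map_iota occ2_31_map_iota ndes_map_iota.
Qed.

(** * Hopping a letter across a block of smaller letters *)

Lemma head_notin_gt x s : x \notin s -> ~~ (head x.+1 s < x) -> x < head x.+1 s.
Proof. by case: s => //= a s; rewrite in_cons negb_or eq_sym => /andP [? _]; lia. Qed.

Lemma last_notin_gt x s : x \notin s -> ~~ (last x.+1 s < x) -> x < last x.+1 s.
Proof. by rewrite -head_rev -(mem_rev s); apply: head_notin_gt. Qed.

(* The default [y.+1] makes both ends of the word act as +oo: the last letter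
   is never a descent top, the first never an ascent top, and absent letters
   are neither. *)
Definition next_in (l : seq nat) (y : nat) : nat := head y.+1 (drop (index y l).+1 l).
Definition desc_top (l : seq nat) (y : nat) : bool := next_in l y < y.
Definition asc_top (l : seq nat) (y : nat) : bool := desc_top (rev l) y.

Lemma desc_top_pivot s t y : y \notin s -> desc_top (s ++ y :: t) y = (head y.+1 t < y).
Proof. by move=> yNs; rewrite /desc_top /next_in drop_pivot. Qed.

Lemma desc_top_notin l y : y \notin l -> desc_top l y = false.
Proof. by move=> yNl; rewrite /desc_top /next_in memNindex // drop_oversize //=; lia. Qed.

Lemma desc_top_cons a l y : y != a -> desc_top (a :: l) y = desc_top l y.
Proof. by rewrite /desc_top /next_in /= eq_sym => /negbTE ->. Qed.

Lemma sum_desc_top l : uniq l -> \sum_(y <- l) desc_top l y = ndes l.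
Proof.
elim: l => [|a l IHl]; first by rewrite big_nil.
rewrite cons_uniq => /andP [aNl uniq_l]; rewrite big_cons ndes_cons -IHl //; congr (_ + _).
  by rewrite -[a :: l]cat0s desc_top_pivot //; case: l {aNl IHl uniq_l} => //=; lia.
apply: eq_big_seq => y yl; rewrite desc_top_cons //.
by apply: contraNneq aNl => <-.
Qed.

(* [x] is a double ascent in [u ++ B ++ x :: v] and a double descent in
   [u ++ x :: B ++ v], and [B] is a maximal run of letters below [x]. *)
Definition hoppable (u B v : seq nat) (x : nat) : bool :=
  [&& B != [::], all (fun b => b < x) B, x < last x.+1 u, x < head x.+1 v
    & uniq (u ++ x :: B ++ v)].

Lemma perm_hop (u B v : seq nat) x : perm_eq (u ++ B ++ x :: v) (u ++ x :: B ++ v).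
Proof. by rewrite perm_cat2l -cat1s perm_catCA. Qed.

Lemma rev_cat_pivot (u B v : seq nat) x : rev (u ++ B ++ x :: v) = rev v ++ x :: rev B ++ rev u.
Proof. by rewrite catA rev_pivot rev_cat. Qed.

Lemma rev_pivot_cat (u B v : seq nat) x : rev (u ++ x :: B ++ v) = rev v ++ rev B ++ x :: rev u.
Proof. by rewrite rev_pivot rev_cat catA. Qed.

Lemma hoppable_rev u B v x : hoppable u B v x -> hoppable (rev v) (rev B) (rev u) x.
Proof.
case/and5P=> B_nil B_lt x_lt_u x_lt_v uniq_w.
apply/and5P; split; rewrite ?all_rev ?last_rev ?head_rev //.
  by rewrite -size_eq0 size_rev size_eq0.
by rewrite -rev_cat_pivot rev_uniq (perm_uniq (perm_hop _ _ _ _)).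
Qed.

Lemma hoppable_notin u B v x : hoppable u B v x -> x \notin u ++ B ++ v.
Proof. by case/and5P=> _ _ _ _ /uniq_pivot_notin. Qed.

Lemma count_lt_split b x h s : b < x < h -> x \notin s ->
  count (fun c => b < c < h) s = count (fun c => b < c < x) s + count (fun c => x < c < h) s.
Proof.
move=> bxh; elim: s => //= c s IHs; rewrite in_cons negb_or => /andP [xNc /IHs ->].
by rewrite addnACA; congr (_ + _); case: ltngtP xNc; lia.
Qed.

Lemma count_between_eq0 a c s : c <= a -> count (fun d => a < d < c) s = 0.
Proof. by move=> ca; apply/eqP; rewrite -leqn0 leqNgt -has_count; apply/hasPn => d _; lia. Qed.

Lemma occ13_2_catl u w w' x : x < last x.+1 u -> head 0 w <= x -> head 0 w' <= x ->
  perm_eq w w' -> occ13_2 w = occ13_2 w' -> occ13_2 (u ++ w) = occ13_2 (u ++ w').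
Proof.
move=> + hw hw' pww' eq_occ; elim: u => // a u IHu x_lt_u.
rewrite !cat_cons !occ13_2_cons; case: u IHu x_lt_u => [_ /= x_lt_a | b u IHu x_lt_u].
  by rewrite !count_between_eq0 //; lia.
have /seq.permP -> : perm_eq (u ++ w) (u ++ w') by rewrite perm_cat2l.
by rewrite IHu.
Qed.

Lemma occ13_2_del_pivot B x v : B != [::] -> all (fun b => b < x) B ->
  x < head x.+1 v -> x \notin v -> occ13_2 (B ++ x :: v) = occ13_2 (B ++ v).
Proof.
case: B => // b B _; elim: B b => [|b' B IHB] b /andP [b_lt_x B_lt] x_lt_v xNv.
  case: v x_lt_v xNv => [|h v] // x_lt_h; rewrite in_cons negb_or => /andP [_ xNv].
  have {}x_lt_h : x < h := x_lt_h.
  rewrite !cat_cons !cat0s !occ13_2_cons; cbn [head behead count].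
  rewrite (count_lt_split (b := b) (x := x) (h := h)) ?b_lt_x //.
  by rewrite (_ : b < h < x = false) ?addnA //; lia.
have /andP [b'_lt_x _] := B_lt.
rewrite !cat_cons [LHS]occ13_2_cons [RHS]occ13_2_cons -!cat_cons IHB //.
by congr (_ + _); rewrite /= !count_cat /= (_ : b < x < b' = false) //; lia.
Qed.

Lemma occ13_2_hop u B v x :
  hoppable u B v x -> occ13_2 (u ++ B ++ x :: v) = occ13_2 (u ++ x :: B ++ v).
Proof.
move=> hopp; have := hoppable_notin hopp; rewrite !mem_cat !negb_or => /and3P [_ _ xNv].
case/and5P: hopp => B_nil B_lt x_lt_u x_lt_v _.
have hB : head 0 (B ++ v) < x by case: B B_nil B_lt => // b B _ /andP [].
apply: (@occ13_2_catl u (B ++ x :: v) (x :: B ++ v) x x_lt_u _ (leqnn x) (perm_hop [::] B v x)).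
- by case: B B_nil B_lt hB => //= b B _ _ /ltnW.
- by rewrite occ13_2_del_pivot // occ13_2_cons count_between_eq0 // ltnW.
Qed.

Lemma desc_top_split l s t y : uniq l -> l = s ++ y :: t -> desc_top l y = (head y.+1 t < y).
Proof.
move=> uniq_l def_l; rewrite def_l desc_top_pivot //.
by move: uniq_l; rewrite def_l => /uniq_pivot_notin; rewrite mem_cat negb_or => /andP [].
Qed.

Lemma desc_top_hop u B v x y : hoppable u B v x -> y != x ->
  desc_top (u ++ B ++ x :: v) y = desc_top (u ++ x :: B ++ v) y.
Proof.
move=> hopp y_neq_x; have uniq2 : uniq (u ++ x :: B ++ v) by case/and5P: hopp.
have uniq1 : uniq (u ++ B ++ x :: v) by rewrite (perm_uniq (perm_hop u B v x)).
case/and5P: hopp => B_nil B_lt x_lt_u x_lt_v _.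
have [yu | yNu] := boolP (y \in u).
  case/splitPr: yu uniq1 uniq2 x_lt_u => s t uniq1 uniq2 x_lt_u.
  rewrite (desc_top_split (s := s) (t := t ++ B ++ x :: v) uniq1); last by rewrite -catA.
  rewrite (desc_top_split (s := s) (t := t ++ x :: B ++ v) uniq2); last by rewrite -catA.
  case: t x_lt_u {uniq1 uniq2} => //; rewrite last_cat /= => x_lt_y.
  by case: B B_nil B_lt => //= b B _ /andP [b_lt_x _]; lia.
have [yB | yNB] := boolP (y \in B).
  have y_lt_x := allP B_lt y yB.
  case/splitPr: yB uniq1 uniq2 {B_lt B_nil} => s t uniq1 uniq2.
  rewrite (desc_top_split (s := u ++ s) (t := t ++ x :: v) uniq1); last by rewrite -!catA.
  rewrite (desc_top_split (s := u ++ x :: s) (t := t ++ v) uniq2); last by rewrite -!catA.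
  by case: t {uniq1 uniq2} => //=; case: v x_lt_v => /= [|h v]; lia.
have [yv | yNv] := boolP (y \in v).
  case/splitPr: yv uniq1 uniq2 => s t uniq1 uniq2.
  rewrite (desc_top_split (s := u ++ B ++ x :: s) (t := t) uniq1); last by rewrite -!catA.
  by rewrite (desc_top_split (s := u ++ x :: B ++ s) (t := t) uniq2); last by rewrite -!catA /= -catA.
by rewrite !desc_top_notin // !(mem_cat, in_cons) !negb_or yNu yNB yNv y_neq_x.
Qed.

Lemma asc_top_hop u B v x y : hoppable u B v x -> y != x ->
  asc_top (u ++ B ++ x :: v) y = asc_top (u ++ x :: B ++ v) y.
Proof.
move=> hopp y_neq_x.
by rewrite /asc_top rev_cat_pivot rev_pivot_cat (desc_top_hop (hoppable_rev hopp)).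
Qed.

Lemma desc_top_hop_pivot u B v x : hoppable u B v x ->
  desc_top (u ++ x :: B ++ v) x /\ ~~ desc_top (u ++ B ++ x :: v) x.
Proof.
move=> hopp; have := hoppable_notin hopp; rewrite !mem_cat !negb_or => /and3P [xNu xNB _].
case/and5P: hopp => B_nil B_lt _ x_lt_v _.
rewrite desc_top_pivot // catA desc_top_pivot ?mem_cat ?negb_or ?xNu ?xNB //.
by split; [case: B B_nil B_lt {xNB} => //= b B _ /andP [] | rewrite -leqNgt ltnW].
Qed.

Lemma asc_top_hop_pivot u B v x : hoppable u B v x ->
  asc_top (u ++ B ++ x :: v) x /\ ~~ asc_top (u ++ x :: B ++ v) x.
Proof.
by move=> /hoppable_rev/desc_top_hop_pivot; rewrite /asc_top rev_cat_pivot rev_pivot_cat.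
Qed.

Fixpoint prefix_lt (x : nat) (s : seq nat) : seq nat :=
  if s is a :: s' then if a < x then a :: prefix_lt x s' else [::] else [::].

Lemma all_prefix_lt x s : all (fun b => b < x) (prefix_lt x s).
Proof. by elim: s => //= a s IHs; case: ifP => //= ->. Qed.

Lemma cat_prefix_lt x s : prefix_lt x s ++ drop (size (prefix_lt x s)) s = s.
Proof. by elim: s => //= a s IHs; case: ifP => //= _; rewrite IHs. Qed.

Lemma head_drop_prefix_lt x s : ~~ (head x.+1 (drop (size (prefix_lt x s)) s) < x).
Proof. by elim: s => [|a s IHs] /=; [rewrite ltnNge leqnSn | case: ifP => /= [_|->]]. Qed.

Lemma prefix_lt_eq0 x s : (prefix_lt x s == [::]) = ~~ (head x.+1 s < x).
Proof. by case: s => [|a s] /=; [rewrite ltnNge leqnSn | case: ifP]. Qed.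

Lemma prefix_lt_cat x B v :
  all (fun b => b < x) B -> ~~ (head x.+1 v < x) -> prefix_lt x (B ++ v) = B.
Proof.
elim: B => [|b B IHB] /=; first by move=> _; case: v => //= a v /negbTE ->.
by case/andP=> -> B_lt v_ge; rewrite IHB.
Qed.

Definition hop_right (x : nat) (l : seq nat) : seq nat :=
  let v := drop (index x l).+1 l in
  take (index x l) l ++ prefix_lt x v ++ x :: drop (size (prefix_lt x v)) v.

Definition hop (x : nat) (l : seq nat) : seq nat :=
  if desc_top l x && ~~ asc_top l x then hop_right x l
  else if asc_top l x && ~~ desc_top l x then rev (hop_right x (rev l))
  else l.

Lemma hop_rightE u B v x : hoppable u B v x -> hop_right x (u ++ x :: B ++ v) = u ++ B ++ x :: v.
Proof.
move=> hopp; have := hoppable_notin hopp; rewrite mem_cat negb_or => /andP [xNu _].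
case/and5P: hopp => _ B_lt _ x_lt_v _.
rewrite /hop_right drop_pivot // take_pivot // prefix_lt_cat ?drop_size_cat //.
by rewrite -leqNgt ltnW.
Qed.

Lemma hopE u B v x : hoppable u B v x ->
  hop x (u ++ x :: B ++ v) = u ++ B ++ x :: v /\ hop x (u ++ B ++ x :: v) = u ++ x :: B ++ v.
Proof.
move=> hopp; have [dt_x2 dt_x1] := desc_top_hop_pivot hopp.
have [at_x1 at_x2] := asc_top_hop_pivot hopp.
rewrite /hop dt_x2 at_x2 hop_rightE //; split => //.
rewrite at_x1 (negbTE dt_x1) rev_cat_pivot hop_rightE ?hoppable_rev //.
by rewrite -rev_pivot_cat revK.
Qed.

Lemma hoppable_split x l : uniq l -> desc_top l x -> ~~ asc_top l x ->
  exists u B v, hoppable u B v x /\ l = u ++ x :: B ++ v.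
Proof.
move=> uniq_l dt_x at_x.
have x_in_l : x \in l by apply: contraLR dt_x => /desc_top_notin ->.
case/splitPr: x_in_l uniq_l dt_x at_x => u w uniq_l dt_x at_x.
have := uniq_pivot_notin uniq_l; rewrite mem_cat negb_or => /andP [xNu xNw].
rewrite desc_top_pivot // in dt_x.
rewrite /asc_top rev_pivot desc_top_pivot ?mem_rev // head_rev in at_x.
set B := prefix_lt x w; exists u, B, (drop (size B) w).
split; last by rewrite cat_prefix_lt.
apply/and5P; split; rewrite ?cat_prefix_lt //.
- by rewrite prefix_lt_eq0 negbK.
- exact: all_prefix_lt.
- exact: last_notin_gt.
- by apply: head_notin_gt; [apply: contra xNw => /mem_drop | apply: head_drop_prefix_lt].
Qed.

Lemma hop_cases x l : uniq l ->
  [\/ exists u B v, hoppable u B v x /\ l = u ++ x :: B ++ v,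
      exists u B v, hoppable u B v x /\ l = u ++ B ++ x :: v
    | asc_top l x = desc_top l x].
Proof.
move=> uniq_l; case dt_x: (desc_top l x); case at_x: (asc_top l x); try by constructor 3.
  by constructor 1; apply: hoppable_split; rewrite ?at_x.
constructor 2; have [|||u [B [v [hopp def_l]]]] := @hoppable_split x (rev l).
- by rewrite rev_uniq.
- exact: at_x.
- by rewrite /asc_top revK dt_x.
exists (rev v), (rev B), (rev u); split; first exact: hoppable_rev.
by rewrite -rev_pivot_cat -def_l revK.
Qed.

Definition mixed_des (S l : seq nat) : nat :=
  \sum_(y <- l) (if y \in S then desc_top l y else asc_top l y).

Lemma mixed_des_hop u B v x S : hoppable u B v x -> x \notin S ->
  mixed_des S (u ++ x :: B ++ v) = mixed_des (x :: S) (u ++ B ++ x :: v) /\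
  mixed_des S (u ++ B ++ x :: v) = mixed_des (x :: S) (u ++ x :: B ++ v).
Proof.
move=> hopp xNS; have [dt_x2 dt_x1] := desc_top_hop_pivot hopp.
have [at_x1 at_x2] := asc_top_hop_pivot hopp.
rewrite /mixed_des !(perm_big _ (perm_hop u B v x)); split; apply: eq_bigr => y _.
all: rewrite in_cons; case: (eqVneq y x) => [->|y_neq_x] /=.
all: rewrite ?(negbTE xNS) ?(negbTE dt_x1) ?(negbTE at_x2) ?dt_x2 ?at_x1 //.
all: by rewrite desc_top_hop ?asc_top_hop.
Qed.

Lemma occ13_2_rev_hop u B v x : hoppable u B v x ->
  occ13_2 (rev (u ++ B ++ x :: v)) = occ13_2 (rev (u ++ x :: B ++ v)).
Proof. by move=> /hoppable_rev/occ13_2_hop; rewrite rev_cat_pivot rev_pivot_cat. Qed.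

Lemma hop_id x l : asc_top l x = desc_top l x -> hop x l = l.
Proof. by rewrite /hop => ->; case: desc_top. Qed.

Lemma mixed_des_cons_id x S l :
  asc_top l x = desc_top l x -> mixed_des (x :: S) l = mixed_des S l.
Proof.
move=> at_dt; apply: eq_bigr => y _; rewrite in_cons.
by case: (eqVneq y x) => [->|] //=; rewrite at_dt if_same.
Qed.

Lemma hop_invariants x S l : uniq l -> x \notin S ->
  [/\ hop x (hop x l) = l, perm_eq (hop x l) l, occ13_2 (hop x l) = occ13_2 l,
      occ13_2 (rev (hop x l)) = occ13_2 (rev l) & mixed_des S (hop x l) = mixed_des (x :: S) l].
Proof.
move=> uniq_l xNS.
case: (hop_cases x uniq_l) => [[u [B [v [hopp ->]]]] | [u [B [v [hopp ->]]]] | at_dt].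
- have [hop_w2 hop_w1] := hopE hopp; have [_ mix_w1] := mixed_des_hop hopp xNS.
  by rewrite hop_w2 hop_w1 mix_w1 perm_hop occ13_2_hop ?occ13_2_rev_hop.
- have [hop_w2 hop_w1] := hopE hopp; have [mix_w2 _] := mixed_des_hop hopp xNS.
  by rewrite hop_w1 hop_w2 mix_w2 perm_sym perm_hop occ13_2_hop ?occ13_2_rev_hop.
- by rewrite !hop_id // mixed_des_cons_id.
Qed.

Lemma mixed_des_sub S l : uniq l -> {subset l <= S} -> mixed_des S l = ndes l.
Proof.
by move=> uniq_l lS; rewrite -sum_desc_top //; apply: eq_big_seq => y /lS ->.
Qed.

Lemma mixed_des_nil l : uniq l -> mixed_des [::] l = ndes (rev l).
Proof. by move=> uniq_l; rewrite -sum_desc_top ?rev_uniq // big_rev. Qed.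

Section WordSums.
Local Open Scope ring_scope.

Variables (R : comNzRingType) (s : seq nat) (F : seq nat -> R) (t : R).
Hypotheses (uniq_s : uniq s) (F_hop : forall x l, uniq l -> F (hop x l) = F l).

Let uniq_word l : l \in permutations s -> uniq l.
Proof. by rewrite mem_permutations => /perm_uniq ->. Qed.

Lemma big_mixed_des S : uniq S ->
  \sum_(l <- permutations s) F l * t ^+ mixed_des S l =
  \sum_(l <- permutations s) F l * t ^+ mixed_des [::] l.
Proof.
elim: S => // x S IHS /andP [xNS uniq_S]; rewrite -IHS //.
rewrite -[RHS](big_involution _ (phi := hop x)) ?permutations_uniq //.
- apply: eq_big_seq => l /uniq_word uniq_l.
  by have [_ _ _ _ ->] := hop_invariants uniq_l xNS; rewrite F_hop.
- move=> l l_word; have [_ hop_l _ _ _] := hop_invariants (uniq_word l_word) xNS.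
  by move: l_word; rewrite !mem_permutations; apply: perm_trans.
- by move=> l /uniq_word uniq_l; have [-> _ _ _ _] := hop_invariants uniq_l xNS.
Qed.

Lemma big_ndes_rev :
  \sum_(l <- permutations s) F l * t ^+ ndes l =
  \sum_(l <- permutations s) F l * t ^+ ndes (rev l).
Proof.
transitivity (\sum_(l <- permutations s) F l * t ^+ mixed_des s l).
  apply: eq_big_seq => l l_word; rewrite mixed_des_sub ?uniq_word // => y.
  by move: l_word; rewrite mem_permutations => /perm_mem ->.
rewrite big_mixed_des //; apply: eq_big_seq => l /uniq_word uniq_l.
by rewrite mixed_des_nil.
Qed.

End WordSums.

Theorem proposition5p2 (R : comNzRingType) (n : nat) (p q t : R) :
  A_poly n p q t = A_poly n q p t.
Proof.
pose F l := (p ^+ occ13_2 l * q ^+ occ13_2 (rev l))%R.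
have F_hop x l : uniq l -> F (hop x l) = F l.
  move=> /(@hop_invariants x [::]) [] // _ _ occ_hop occ_rev_hop _.
  by rewrite /F occ_hop occ_rev_hop.
rewrite !A_poly_words (big_ndes_rev t (iota_uniq 0 n) F_hop).
rewrite -(big_involution _ (phi := rev)) ?permutations_uniq //; last first.
- by move=> l _; rewrite revK.
- by move=> l; rewrite !mem_permutations perm_rev.
by apply: eq_bigr => l _; rewrite /F revK [(p ^+ _ * _)%R]GRing.mulrC.
Qed.
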